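(* Let $M$ be a Hausdorff space satisfying the first axiom of countability and the Lindelöf condition (every open cover has a countable subcover), and let $\mathcal{B}(M)$ be the $\sigma$-algebra of Borel subsets of $M$. A subset $\mathfrak{p}\subseteq\mathcal{B}(M)$ is a point in $\mathcal{B}(M)$ if and only if there is $x\in M$ with $\mathfrak{p}=\{A\in\mathcal{B}(M): x\in A\}$ (i.e. $\mathfrak{p}$ is an atomic quasipoint of $\mathcal{B}(M)$).
   Context: A point in the $\sigma$-complete lattice $\mathcal{B}(M)$ (lattice operations: union and intersection) is a nonempty subset $\mathfrak{p}$ such that: (1) $\emptyset\notin\mathfrak{p}$; (2) $A,B\in\mathfrak{p}\Rightarrow A\cap B\in\mathfrak{p}$; (3) $A\in\mathfrak{p}$, $A\subseteq B\in\mathcal{B}(M)\Rightarrow B\in\mathfrak{p}$; (4) for every countable family $(A_n)$ in $\mathcal{B}(M)$ with $\bigcup_n A_n\in\mathfrak{p}$ there is $n$ with $A_n\in\mathfrak{p}$. *)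

From HB Require Import structures.
From mathcomp Require Import all_boot all_order all_algebra.
From mathcomp Require Import all_classical all_reals topology measurable_structure.

Local Open Scope classical_set_scope.

Definition Borel (M : topologicalType) : set (set M) := <<s open >>.

(* First axiom of countability: every point has a countable neighbourhood base
   (indexed by nat; repetitions allowed, so finite bases are included). *)
Definition first_countable (M : topologicalType) : Prop :=
  forall x : M, exists B : nat -> set M,
    (forall n, open (B n) /\ B n x) /\
    (forall U, nbhs x U -> exists n, B n `<=` U).

Definition lindelof (M : topologicalType) : Prop :=
  forall F : set (set M), F `<=` open -> \bigcup_(A in F) A = setT ->
    exists G : set (set M), [/\ G `<=` F, countable G & \bigcup_(A in G) A = setT].

Definition is_point {M : Type} (L : set (set M)) (p : set (set M)) : Prop :=
  p `<=` L /\
      p !=set0 /\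
      ~ p set0 /\
      (forall A B, p A -> p B -> p (A `&` B)) /\
      (forall A B, p A -> L B -> A `<=` B -> p B) /\
      (forall An : nat -> set M, (forall n, L (An n)) ->
          p (\bigcup_n An n) -> exists n, p (An n)).

From HB Require Import structures.
From mathcomp Require Import all_boot all_order all_algebra.
From mathcomp Require Import all_classical all_reals topology measurable_structure.
Local Open Scope classical_set_scope.

(* A point p of a sigma-algebra meets every countable Borel cover, so by the
   Lindelof property some x has all its open neighbourhoods in p.  Since M is
   T1 and first countable, {x} is a countable intersection of open sets B_n,
   all in p; a set A in p missing x would be the countable union of the sets
   A \ B_n, one of which would then lie in p while being disjoint from some B_n
   in p.  Hence every member of p contains x, and p is maximal because, for
   each Borel A, either A or its complement lies in p. *)

Definition principal_point {T : Type} (L : set (set T)) (x : T) : set (set T) :=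
  [set A | L A /\ A x].

Section sigma_algebra_points.
Context {T : Type} {L : set (set T)}.
Hypothesis sL : sigma_algebra setT L.

Let L0 : L set0. Proof. by case: sL. Qed.

Let LT : L setT.
Proof. by have [] := (sigma_algebraP (fun X _ => @subsetT _ X)).1 sL. Qed.

Let LI : setI_closed L.
Proof. by have [] := (sigma_algebraP (fun X _ => @subsetT _ X)).1 sL. Qed.

Let LC (A : set T) : L A -> L (~` A).
Proof. by rewrite -setTD; case: sL => _ LD _; exact: LD. Qed.

Lemma principal_point_is_point (x : T) : is_point L (principal_point L x).
Proof.
split; first by move=> A [].
split; first by exists setT.
split; first by move=> [].
split; first by move=> A B [LA Ax] [LB Bx]; split => //; exact: LI.
split; first by move=> A B [_ Ax] LB AB; split => //; exact: AB.
by move=> An LAn [_ [n _ Anx]]; exists n.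
Qed.

Context {p : set (set T)}.
Hypothesis pp : is_point L p.

Let pL : p `<=` L. Proof. by case: pp. Qed.
Let p0 : ~ p set0. Proof. by case: pp => _ [_ []]. Qed.
Let pI {A B : set T} : p A -> p B -> p (A `&` B).
Proof. by case: pp => _ [_ [_ [pI _]]]; exact: pI. Qed.
Let pS {A B : set T} : p A -> L B -> A `<=` B -> p B.
Proof. by case: pp => _ [_ [_ [_ [pS _]]]]; exact: pS. Qed.
Let pU {An : nat -> set T} : (forall n, L (An n)) ->
  p (\bigcup_n An n) -> exists n, p (An n).
Proof. by case: pp => _ [_ [_ [_ [_ pU]]]]; exact: pU. Qed.

Lemma point_setT : p setT.
Proof. by case: pp => _ [[A pA] _]; exact: (pS pA LT). Qed.

Lemma point_setC (A : set T) : L A -> ~ p A -> p (~` A).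
Proof.
move=> LA npA.
have LAC n : L (bigcup2 A (~` A) n) by case: n => [|[|n]] //=; exact: LC.
have : p (\bigcup_n bigcup2 A (~` A) n) by rewrite bigcup2E setUv; exact: point_setT.
by case/(pU LAC) => -[|[|n]].
Qed.

Lemma point_bigcup_countable (G : set (set T)) : G `<=` L -> countable G ->
  p (\bigcup_(A in G) A) -> exists2 A, G A & p A.
Proof.
move=> GL cG pG.
have [g Gg] : exists g : nat -> set T, G `<=` range g := pcard_surjP cG.
pose F n : set T := if pselect (G (g n)) then g n else set0.
have FL n : L (F n) by rewrite /F; case: pselect => [Ggn|nGgn] /=; [exact: GL|].
have FG : \bigcup_n F n = \bigcup_(A in G) A.
  apply/seteqP; split => x.
    by case=> n _; rewrite /F; case: pselect => [Ggn|nGgn] //= gnx; exists (g n).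
  case=> A GA Ax; have [n _ gnA] := Gg A GA.
  by exists n => //; rewrite /F; case: pselect => /=; rewrite gnA.
have [n] : exists n, p (F n) by apply: pU => //; rewrite FG.
by rewrite /F; case: pselect => [Ggn|nGgn] /= pgn; [exists (g n)|].
Qed.

Lemma point_mem_Gdelta (x : T) (B : nat -> set T) :
  (forall n, L (B n)) -> (forall n, p (B n)) -> \bigcap_n B n `<=` [set x] ->
  forall A, p A -> A x.
Proof.
move=> LB pB Bx A pA; apply: contrapT => nAx.
have AE : A = \bigcup_n (A `&` ~` B n).
  apply/seteqP; split => [y Ay|y [n _ []] //].
  have yx : y <> x by move=> yx; apply: nAx; rewrite -yx.
  have /existsNP [n nBy] : ~ (forall n, B n y).
    by move=> By; apply: yx; apply: Bx => n _; exact: By.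
  by exists n.
have [n pABn] : exists n, p (A `&` ~` B n).
  by apply: pU; [move=> n; apply: LI; [exact: pL | exact: LC] | rewrite -AE].
apply: p0; apply: (pS (pI pABn (pB n))) => // y [[_ nBy] By].
exact: nBy.
Qed.

Lemma point_principal (x : T) : (forall A, p A -> A x) -> p = principal_point L x.
Proof.
move=> px; apply/seteqP; split => [A pA|A [LA Ax]]; first by split; [exact: pL | exact: px].
by apply: contrapT => npA; have := px _ (point_setC _ LA npA).
Qed.

End sigma_algebra_points.

Lemma Borel_sigma_algebra (M : topologicalType) : sigma_algebra setT (Borel M).
Proof. exact: smallest_sigma_algebra. Qed.

Lemma open_Borel (M : topologicalType) (U : set M) : open U -> Borel M U.
Proof. exact: sub_sigma_algebra. Qed.

Lemma lindelof_point_center {M : topologicalType} {p : set (set M)} :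
  lindelof M -> is_point (Borel M) p ->
  exists x : M, forall U, open U -> U x -> p U.
Proof.
move=> hL pp; apply: contrapT => /forallNP nocenter.
have [G [GF cG GT]] : exists G : set (set M),
    [/\ G `<=` [set U | open U /\ ~ p U], countable G & \bigcup_(A in G) A = setT].
  apply: hL; first by move=> U [].
  apply/seteqP; split => // x _; have /existsNP [U] := nocenter x.
  by move=> /not_implyP [oU /not_implyP [Ux npU]]; exists U.
have GB : G `<=` Borel M by move=> U /GF [/open_Borel].
have sB := Borel_sigma_algebra M.
have pG : p (\bigcup_(A in G) A) by rewrite GT; exact: (point_setT sB pp).
by have [U /GF [_ npU]] := point_bigcup_countable sB pp _ GB cG pG.
Qed.

Lemma first_countable_accessible_Gdelta {M : topologicalType} :
  accessible_space M -> first_countable M -> forall x : M,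
  exists B : nat -> set M, [/\ forall n, open (B n), forall n, B n x
                             & \bigcap_n B n `<=` [set x]].
Proof.
move=> hA hF x; have [B [oB baseB]] := hF x.
exists B; split => [n|n|y By]; [by case: (oB n) | by case: (oB n) |].
apply: contrapT => /eqP; rewrite eq_sym => /hA [U [oU /set_mem Ux /set_mem nUy]].
have [n BnU] := baseB U (open_nbhs_nbhs (conj oU Ux)).
by apply: nUy; apply: BnU; exact: By.
Qed.

Theorem proposition3p26 (M : topologicalType) :
  @hausdorff_space M -> first_countable M -> lindelof M ->
  forall p : set (set M),
    is_point (Borel M) p <->
    exists x : M, p = [set A | Borel M A /\ A x].
Proof.
move=> hH hF hL p; have sB := Borel_sigma_algebra M.
split => [pp|[x ->]]; last exact: principal_point_is_point.
have [x px] := lindelof_point_center hL pp.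
have [B [oB Bx Bcap]] := first_countable_accessible_Gdelta (hausdorff_accessible hH) hF x.
exists x; apply: (point_principal sB pp).
apply: (point_mem_Gdelta sB pp x B _ _ Bcap) => n.
- exact: open_Borel (oB n).
- exact: px (oB n) (Bx n).
Qed.
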